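(* For any ideal $\mathcal{I}$: (a) if $\mathcal{I}$ is a hereditary weak P-ideal then $\mathcal{I}$ is unboring, and if $\mathcal{I}$ is unboring then $\mathcal{I}$ is a weak P-ideal (equivalently: $\mathrm{Fin}^2\sqsubseteq\mathcal{I}\implies\mathcal{BI}\sqsubseteq\mathcal{I}\implies(\exists A\notin\mathcal{I})\ \mathrm{Fin}^2\sqsubseteq\mathcal{I}|A$); (b) neither of the two implications in (a) can be reversed in general (i.e., there is an unboring ideal which is not a hereditary weak P-ideal, and a weak P-ideal which is boring); (c) if $\mathcal{I}$ is contained in some unboring ideal then $\mathcal{I}$ is unboring; in particular, if $\mathcal{I}$ is contained in some hereditary weak P-ideal then $\mathcal{I}$ is unboring.
   Context: An ideal on an infinite countable set $X$ is a family $\mathcal{I}\subseteq\mathcal{P}(X)$ closed under subsets and finite unions, containing all finite subsets, with $X\notin\mathcal{I}$. $\mathcal{I}|A=\{B\cap A:B\in\mathcal{I}\}$. $\mathrm{Fin}^2$: ideal on $\omega^2$ of all $A$ with only finitely many $n$ such that $\{m:(n,m)\in A\}$ is infinite. $\mathcal{BI}$: ideal on $\omega^3$ of all $A$ for which there is $k$ with $\{(j,l):(i,j,l)\in A\}\in\mathrm{Fin}^2$ for $i<k$ and finite for $i\ge k$. $\mathcal{I}\sqsubseteq\mathcal{J}$: there is a bijection $f:\bigcup\mathcal{J}\to\bigcup\mathcal{I}$ with $f^{-1}[A]\in\mathcal{J}$ for all $A\in\mathcal{I}$. $\mathcal{I}$ is boring if $\mathcal{BI}\sqsubseteq\mathcal{I}$,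 unboring otherwise. $\mathcal{I}$ is a weak P-ideal if $\mathrm{Fin}^2\not\sqsubseteq\mathcal{I}$ (equivalently, every partition of $\bigcup\mathcal{I}$ into countably many sets from $\mathcal{I}$ admits $S\notin\mathcal{I}$ meeting each piece in a finite set), and a hereditary weak P-ideal if $\mathrm{Fin}^2\not\sqsubseteq\mathcal{I}|A$ for every $A\notin\mathcal{I}$. *)

From Stdlib Require Import List Arith.

Definition finite_set {X : Type} (A : X -> Prop) : Prop :=
  exists l : list X, forall x, A x -> In x l.

Definition countable_infinite (X : Type) : Prop :=
  (exists f : X -> nat, forall x y, f x = f y -> x = y) /\
  ~ finite_set (fun _ : X => True).

Definition is_ideal {X : Type} (I : (X -> Prop) -> Prop) : Prop :=
  (forall A B : X -> Prop, I B -> (forall x, A x -> B x) -> I A) /\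
  (forall A B : X -> Prop, I A -> I B -> I (fun x => A x \/ B x)) /\
  (forall A : X -> Prop, finite_set A -> I A) /\
  ~ I (fun _ => True).

Definition restrict {X : Type} (I : (X -> Prop) -> Prop) (A : X -> Prop)
  : ({x : X | A x} -> Prop) -> Prop :=
  fun C => exists B, I B /\ forall y : {x : X | A x}, C y <-> B (proj1_sig y).

Definition sqsub {X Y : Type} (I : (X -> Prop) -> Prop) (J : (Y -> Prop) -> Prop)
  : Prop :=
  exists (f : Y -> X) (g : X -> Y),
    (forall x, f (g x) = x) /\ (forall y, g (f y) = y) /\
    (forall A : X -> Prop, I A -> J (fun y => A (f y))).

Definition Fin2 (A : nat * nat -> Prop) : Prop :=
  finite_set (fun n => ~ finite_set (fun m => A (n, m))).

Definition BI (A : nat * nat * nat -> Prop) : Prop :=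
  exists k, forall i,
    (i < k -> Fin2 (fun p => A (i, fst p, snd p))) /\
    (k <= i -> finite_set (fun p => A (i, fst p, snd p))).

Definition boring {X : Type} (I : (X -> Prop) -> Prop) : Prop := sqsub BI I.
Definition unboring {X : Type} (I : (X -> Prop) -> Prop) : Prop := ~ boring I.

Definition weak_P {X : Type} (I : (X -> Prop) -> Prop) : Prop := ~ sqsub Fin2 I.

Definition hereditary_weak_P {X : Type} (I : (X -> Prop) -> Prop) : Prop :=
  forall A : X -> Prop, ~ I A -> ~ sqsub Fin2 (restrict I A).

(** (a) rests on two comparisons: [BI ⊑ Fin2], and, given a copy of [BI]
    inside [I], a copy of [Fin2] inside [I|A] for some [A ∉ I].  If some
    column of the copy of [BI] is [I]-positive, [A] is that column, on which
    [BI] traces [Fin2]; otherwise every column lies in [I], hence so does the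
    preimage of every set of the ideal generated by [BI] and the columns,
    which is a copy of [Fin2], and [A] is the whole space.
    For (b): [Fin ⊕ Fin2] is unboring because every infinite subset of [ω^3]
    has an infinite subset in [BI], so the image of the [Fin]-part under a
    copy of [BI] would be finite.  [BI] is a weak P-ideal: given a copy of
    [Fin2] inside [BI], pick [c i m] in column [i] and sent beyond the [m]-th
    column of [ω^2]; then [{c i m : i <= m}] is sent to a set with finite
    sections, yet it meets every column of [ω^3] in an infinite set.
    (c) is the monotonicity of [⊑] in the larger ideal. *)

From Stdlib Require Import List Arith Lia Classical ClassicalEpsilon
  ProofIrrelevance Cantor.
Import ListNotations.

Arguments to_nat : simpl never.
Arguments of_nat : simpl never.

Lemma finite_subset {X : Type} (A B : X -> Prop) :
  finite_set B -> (forall x, A x -> B x) -> finite_set A.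
Proof. intros [l Hl] HAB. exists l. auto. Qed.

Lemma finite_union {X : Type} (A B : X -> Prop) :
  finite_set A -> finite_set B -> finite_set (fun x => A x \/ B x).
Proof.
  intros [l1 H1] [l2 H2]. exists (l1 ++ l2).
  intros x [Hx|Hx]; apply in_or_app; auto.
Qed.

Lemma finite_image {X Y : Type} (h : X -> Y) (A : X -> Prop) (B : Y -> Prop) :
  finite_set A -> (forall y, B y -> exists x, A x /\ y = h x) -> finite_set B.
Proof.
  intros [l Hl] HB. exists (map h l). intros y By.
  destruct (HB y By) as [x [Ax ->]]. apply in_map, Hl, Ax.
Qed.

Lemma finite_big_union {X : Type} (k : nat) (S : nat -> X -> Prop) :
  (forall i, i < k -> finite_set (S i)) ->
  finite_set (fun x => exists i, i < k /\ S i x).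
Proof.
  induction k as [|k IH]; intros HS.
  - exists []. intros x [i [Hi _]]. lia.
  - apply (finite_subset _ _ (finite_union _ _ (IH (fun i Hi => HS i ltac:(lia)))
                                                (HS k ltac:(lia))));
      intros x [i [Hi Sx]].
    destruct (Nat.eq_dec i k) as [->|Hne]; [right; exact Sx|].
    left. exists i. split; [lia|exact Sx].
Qed.

Lemma finite_bounded_image {X : Type} (h : X -> nat) (A : X -> Prop) :
  finite_set A -> exists M, forall x, A x -> h x <= M.
Proof.
  intros [l Hl]. exists (list_max (map h l)). intros x Ax.
  assert (Hall := proj1 (list_max_le (map h l) _) (le_n _)).
  rewrite Forall_forall in Hall. apply Hall, in_map, Hl, Ax.
Qed.

Lemma nat_not_finite : ~ finite_set (fun _ : nat => True).
Proof.
  intros Hfin. destruct (finite_bounded_image (fun n => n) _ Hfin) as [M HM].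
  specialize (HM (S M) I). lia.
Qed.

Lemma finite_le (m : nat) : finite_set (fun n => n <= m).
Proof. exists (seq 0 (S m)). intros n Hn. apply in_seq. lia. Qed.

Lemma finite_pairs_lt (n : nat) :
  finite_set (fun q : nat * nat => fst q < n /\ snd q < n).
Proof.
  exists (list_prod (seq 0 n) (seq 0 n)). intros [a b] [Ha Hb].
  apply in_prod; apply in_seq; simpl in *; lia.
Qed.

Lemma countable_infinite_of_retractions {X : Type}
    (e : nat -> X) (d : X -> nat) (s : X -> nat) (r : nat -> X) :
  (forall x, r (s x) = x) -> (forall n, d (e n) = n) -> countable_infinite X.
Proof.
  intros Hrs Hde. split.
  - exists s. intros x y Hxy. rewrite <- (Hrs x), <- (Hrs y), Hxy. reflexivity.
  - intros Hfin. apply nat_not_finite. apply (finite_image d _ _ Hfin).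
    intros n _. exists (e n). split; [exact I|rewrite Hde; reflexivity].
Qed.

(** * The ideal [Fin2] *)

Lemma Fin2_subset (A B : nat * nat -> Prop) :
  Fin2 B -> (forall p, A p -> B p) -> Fin2 A.
Proof.
  intros HB HAB. apply (finite_subset _ _ HB). intros n HA HfinB.
  apply HA. apply (finite_subset _ _ HfinB). intros m. apply HAB.
Qed.

Lemma Fin2_union (A B : nat * nat -> Prop) :
  Fin2 A -> Fin2 B -> Fin2 (fun p => A p \/ B p).
Proof.
  intros HA HB. apply (finite_subset _ _ (finite_union _ _ HA HB)).
  intros n Hinf. apply NNPP. intros Hfin. apply not_or_and in Hfin.
  destruct Hfin as [HfinA HfinB]. apply NNPP in HfinA, HfinB.
  exact (Hinf (finite_union _ _ HfinA HfinB)).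
Qed.

Lemma Fin2_of_finite_sections (A : nat * nat -> Prop) :
  (forall n, finite_set (fun m => A (n, m))) -> Fin2 A.
Proof. intros HA. exists []. intros n Hinf. contradiction (Hinf (HA n)). Qed.

Lemma Fin2_of_finite (A : nat * nat -> Prop) : finite_set A -> Fin2 A.
Proof.
  intros HA. apply Fin2_of_finite_sections. intros n.
  apply (finite_image snd _ _ HA). intros m Am. exists (n, m). auto.
Qed.

Lemma Fin2_of_line (j : nat) (A : nat * nat -> Prop) :
  (forall p, A p -> fst p = j) -> Fin2 A.
Proof.
  intros HA. exists [j]. intros n Hinf. destruct (Nat.eq_dec n j) as [->|Hne].
  - left. reflexivity.
  - exfalso. apply Hinf. exists []. intros m Am. exact (Hne (HA _ Am)).
Qed.

Lemma Fin2_columns_le (m : nat) : Fin2 (fun p => fst p <= m).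
Proof.
  apply (finite_subset _ _ (finite_le m)). intros n Hinf.
  apply NNPP. intros Hn. apply Hinf. exists []. simpl. lia.
Qed.

Lemma not_Fin2_full : ~ Fin2 (fun _ => True).
Proof.
  intros Hfin. apply nat_not_finite. apply (finite_subset _ _ Hfin).
  intros n _. exact nat_not_finite.
Qed.

(** * The ideal [BI] *)

Definition column (i : nat) (y : nat * nat * nat) : Prop := fst (fst y) = i.

Lemma BI_subset (A B : nat * nat * nat -> Prop) :
  BI B -> (forall y, A y -> B y) -> BI A.
Proof.
  intros [k Hk] HAB. exists k. intros i. destruct (Hk i) as [Hlt Hge].
  split; intros Hi.
  - apply (Fin2_subset _ _ (Hlt Hi)). intros p. apply HAB.
  - apply (finite_subset _ _ (Hge Hi)). intros p. apply HAB.
Qed.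

Lemma BI_of_finite_sections (A : nat * nat * nat -> Prop) :
  (forall i, finite_set (fun p => A (i, fst p, snd p))) -> BI A.
Proof. intros HA. exists 0. intros i. split; [lia|auto]. Qed.

Lemma BI_of_finite (A : nat * nat * nat -> Prop) : finite_set A -> BI A.
Proof.
  intros HA. apply BI_of_finite_sections. intros i.
  apply (finite_image (fun y => (snd (fst y), snd y)) _ _ HA).
  intros [j l] Ap. exists (i, j, l). auto.
Qed.

Lemma BI_of_column (i : nat) (A : nat * nat * nat -> Prop) :
  (forall y, A y -> column i y) -> Fin2 (fun p => A (i, fst p, snd p)) -> BI A.
Proof.
  intros Hcol Hsec. exists (S i). intros i'.
  assert (Hempty : i' <> i -> finite_set (fun p => A (i', fst p, snd p))).
  { intros Hne. exists []. intros p Ap. exact (Hne (Hcol _ Ap)). }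
  split; intros Hi'.
  - destruct (Nat.eq_dec i' i) as [->|Hne]; [exact Hsec|].
    exact (Fin2_of_finite _ (Hempty Hne)).
  - apply Hempty. lia.
Qed.

Lemma BI_not_column (A : nat * nat * nat -> Prop) (i : nat) :
  BI A -> ~ (forall p, A (i, fst p, snd p)).
Proof.
  intros [k Hk] Hfull. destruct (Hk i) as [Hlt Hge].
  destruct (lt_dec i k) as [Hi|Hi].
  - apply not_Fin2_full. apply (Fin2_subset _ _ (Hlt Hi)). intros p _. apply Hfull.
  - apply not_Fin2_full, Fin2_of_finite.
    apply (finite_subset _ _ (Hge ltac:(lia))). intros p _. apply Hfull.
Qed.

Lemma BI_ideal : is_ideal BI.
Proof.
  split; [|split; [|split]].
  - intros A B HB HAB. exact (BI_subset A B HB HAB).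
  - intros A B [k1 H1] [k2 H2]. exists (max k1 k2). intros i.
    destruct (H1 i) as [H1lt H1ge], (H2 i) as [H2lt H2ge]. split; intros Hi.
    + apply (Fin2_union (fun p => A (i, fst p, snd p)) (fun p => B (i, fst p, snd p))).
      * destruct (lt_dec i k1); [auto|apply Fin2_of_finite, H1ge; lia].
      * destruct (lt_dec i k2); [auto|apply Fin2_of_finite, H2ge; lia].
    + apply (finite_union (fun p => A (i, fst p, snd p)) (fun p => B (i, fst p, snd p)));
        [apply H1ge|apply H2ge]; lia.
  - exact BI_of_finite.
  - intros HBI. exact (BI_not_column _ 0 HBI (fun _ => I)).
Qed.

Lemma BI_infinite_lines_finite (A : nat * nat * nat -> Prop) :
  BI A -> finite_set (fun q : nat * nat => ~ finite_set (fun l => A (fst q, snd q, l))).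
Proof.
  intros [k Hk].
  assert (Hlines : forall i, i < k ->
            finite_set (fun q : nat * nat => fst q = i /\ ~ finite_set (fun l => A (i, snd q, l)))).
  { intros i Hi. destruct (Hk i) as [Hlt _].
    apply (finite_image (fun j => (i, j)) _ _ (Hlt Hi)).
    intros [a j] [Ea Hinf]. simpl in Ea, Hinf. subst a. exists j. auto. }
  apply (finite_subset _ _ (finite_big_union k _ Hlines)).
  intros [i j] Hinf. exists i. simpl. destruct (lt_dec i k) as [Hi|Hi]; [auto|].
  exfalso. destruct (Hk i) as [_ Hge]. apply Hinf.
  apply (finite_image snd _ _ (Hge ltac:(lia))). intros l Al. exists (j, l). auto.
Qed.

Lemma finite_of_BI_subsets_finite (T : nat * nat * nat -> Prop) :
  (forall B, BI B -> (forall y, B y -> T y) -> finite_set B) -> finite_set T.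
Proof.
  intros HT.
  assert (Hline : forall i j, finite_set (fun l => T (i, j, l))).
  { intros i j.
    assert (HB : finite_set (fun y => column i y /\ snd (fst y) = j /\ T y)).
    { apply HT; [|intros y [_ [_ Ty]]; exact Ty].
      apply (BI_of_column i); [intros y [Hy _]; exact Hy|].
      apply (Fin2_of_line j). intros p [_ [Hj _]]. exact Hj. }
    apply (finite_image snd _ _ HB). intros l Tl. exists (i, j, l). repeat split. exact Tl. }
  assert (Hcolumn : forall i, finite_set (fun p => T (i, fst p, snd p))).
  { intros i.
    assert (HB : finite_set (fun y => column i y /\ T y)).
    { apply HT; [|intros y [_ Ty]; exact Ty].
      apply (BI_of_column i); [intros y [Hy _]; exact Hy|].
      apply Fin2_of_finite_sections. intros j.
      apply (finite_subset _ _ (Hline i j)). intros l [_ Tl]. exact Tl. }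
    apply (finite_image (fun y => (snd (fst y), snd y)) _ _ HB).
    intros [j l] Tp. exists (i, j, l). split; [split; [reflexivity|exact Tp]|reflexivity]. }
  apply HT; [apply BI_of_finite_sections, Hcolumn|auto].
Qed.

Lemma countable_infinite_nat3 : countable_infinite (nat * nat * nat).
Proof.
  apply (countable_infinite_of_retractions (fun n => (n, 0, 0)) (fun y => fst (fst y))
           (fun y => to_nat (to_nat (fst y), snd y))
           (fun n => (of_nat (fst (of_nat n)), snd (of_nat n)))).
  - intros [q l]. simpl. rewrite cancel_of_to. simpl. rewrite cancel_of_to. reflexivity.
  - reflexivity.
Qed.

(** * The order [⊑] *)

Definition sqsub_by {X Y : Type} (f : Y -> X) (g : X -> Y)
    (I : (X -> Prop) -> Prop) (J : (Y -> Prop) -> Prop) : Prop :=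
  (forall x, f (g x) = x) /\ (forall y, g (f y) = y) /\
  (forall A, I A -> J (fun y => A (f y))).

Lemma sqsub_refl {X : Type} (I : (X -> Prop) -> Prop) : sqsub I I.
Proof. exists (fun x => x), (fun x => x). auto. Qed.

Lemma sqsub_trans {X Y Z : Type} (I : (X -> Prop) -> Prop) (J : (Y -> Prop) -> Prop)
    (K : (Z -> Prop) -> Prop) :
  sqsub I J -> sqsub J K -> sqsub I K.
Proof.
  intros [f1 [g1 [fg1 [gf1 H1]]]] [f2 [g2 [fg2 [gf2 H2]]]].
  exists (fun z => f1 (f2 z)), (fun x => g2 (g1 x)).
  split; [|split]; intros.
  - rewrite fg2. apply fg1.
  - rewrite gf1. apply gf2.
  - exact (H2 _ (H1 _ H)).
Qed.

Lemma sqsub_subideal {X Y : Type} (K : (X -> Prop) -> Prop) (I J : (Y -> Prop) -> Prop) :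
  sqsub K I -> (forall A, I A -> J A) -> sqsub K J.
Proof.
  intros [f [g [fg [gf H]]]] HIJ. exists f, g. split; [|split]; auto.
Qed.

Lemma sqsub_restrict_full {X : Type} (I : (X -> Prop) -> Prop) :
  sqsub I (restrict I (fun _ => True)).
Proof.
  exists (@proj1_sig X _), (fun x => exist _ x Logic.I).
  split; [|split].
  - reflexivity.
  - intros [x []]. reflexivity.
  - intros A HA. exists A. split; [exact HA|reflexivity].
Qed.

Lemma restrict_sqsub_by {X Y : Type} (f : Y -> X) (g : X -> Y)
    (K : (X -> Prop) -> Prop) (J : (Y -> Prop) -> Prop) (A : X -> Prop) :
  sqsub_by f g K J -> sqsub (restrict K A) (restrict J (fun y => A (f y))).
Proof.
  intros [fg [gf H]].
  exists (fun y : {y | A (f y)} => exist A (f (proj1_sig y)) (proj2_sig y)).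
  exists (fun x : {x | A x} => exist (fun y => A (f y)) (g (proj1_sig x))
                                   (eq_ind_r A (proj2_sig x) (fg (proj1_sig x)))).
  split; [|split].
  - intros [x Ax]. apply subset_eq_compat, fg.
  - intros [y Ay]. apply subset_eq_compat, gf.
  - intros C [B [HB HC]]. exists (fun y => B (f y)). split; [apply H, HB|].
    intros [y Ay]. apply (HC (exist A (f y) Ay)).
Qed.

Lemma Fin2_sqsub_restrict_column (i : nat) : sqsub Fin2 (restrict BI (column i)).
Proof.
  exists (fun y : {y | column i y} => (snd (fst (proj1_sig y)), snd (proj1_sig y))).
  exists (fun p => exist (column i) (i, fst p, snd p) eq_refl).
  split; [|split].
  - intros [j l]. reflexivity.
  - intros [[[i' j] l] Hy]. unfold column in Hy. simpl in Hy. subst i'.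
    apply subset_eq_compat. reflexivity.
  - intros C HC. exists (fun y => column i y /\ C (snd (fst y), snd y)). split.
    + apply (BI_of_column i); [intros y [Hy _]; exact Hy|].
      apply (Fin2_subset _ _ HC). intros [j l] [_ Cp]. exact Cp.
    + intros [y Hy]. simpl. tauto.
Qed.

Lemma BI_sqsub_Fin2 : sqsub BI Fin2.
Proof.
  exists (fun p : nat * nat => (of_nat (fst p), snd p)).
  exists (fun y => (to_nat (fst y), snd y)).
  split; [|split].
  - intros [q l]. simpl. rewrite cancel_of_to. reflexivity.
  - intros [n l]. simpl. rewrite cancel_to_of. reflexivity.
  - intros A HA. apply (finite_image to_nat _ _ (BI_infinite_lines_finite A HA)).
    intros n Hinf. exists (of_nat n). rewrite cancel_to_of.
    split; [rewrite <- surjective_pairing; exact Hinf|reflexivity].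
Qed.

Definition BI_plus_columns (A : nat * nat * nat -> Prop) : Prop :=
  exists L : list nat, BI (fun y => A y /\ ~ In (fst (fst y)) L).

Lemma Fin2_sqsub_BI_plus_columns : sqsub Fin2 BI_plus_columns.
Proof.
  exists (fun y : nat * nat * nat => (fst (fst y), to_nat (snd (fst y), snd y))).
  exists (fun p => (fst p, fst (of_nat (snd p)), snd (of_nat (snd p)))).
  split; [|split].
  - intros [i n]. simpl. rewrite <- surjective_pairing, cancel_to_of. reflexivity.
  - intros [[i j] l]. simpl. rewrite cancel_of_to. reflexivity.
  - intros C [L HL]. exists L. apply BI_of_finite_sections. intros i. simpl.
    destruct (classic (In i L)) as [Hin|Hout].
    + exists []. intros p [_ Hn]. contradiction.
    + assert (Hfin : finite_set (fun m => C (i, m))).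
      { apply NNPP. intros Hinf. exact (Hout (HL i Hinf)). }
      apply (finite_image of_nat _ _ Hfin). intros [j l] [Cp _].
      exists (to_nat (j, l)). rewrite cancel_of_to. auto.
Qed.

Lemma ideal_union_list {X : Type} (I : (X -> Prop) -> Prop) (A : nat -> X -> Prop) :
  is_ideal I -> forall L, (forall n, In n L -> I (A n)) ->
  I (fun x => exists n, In n L /\ A n x).
Proof.
  intros [Hsub [Hunion [Hfin _]]] L. induction L as [|a L IH]; intros HL.
  - apply Hfin. exists []. intros x [n [[] _]].
  - apply (Hsub _ _ (Hunion _ _ (HL a (or_introl eq_refl))
                                (IH (fun n Hn => HL n (or_intror Hn))))).
    intros x [n [[<-|Hn] Ax]]; [left; exact Ax|right; eauto].
Qed.

Lemma sqsub_by_BI_plus_columns {X : Type} (I : (X -> Prop) -> Prop)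
    (f : X -> nat * nat * nat) (g : nat * nat * nat -> X) :
  is_ideal I -> sqsub_by f g BI I -> (forall i, I (fun x => column i (f x))) ->
  sqsub_by f g BI_plus_columns I.
Proof.
  intros Hid [fg [gf H]] Hcol. split; [exact fg|split; [exact gf|]].
  intros A [L HL]. pose proof Hid as [Hsub [Hunion _]].
  apply (Hsub _ _ (Hunion _ _ (ideal_union_list I (fun i x => column i (f x)) Hid L
                                                 (fun i _ => Hcol i))
                              (H _ HL))).
  intros x Ax. destruct (classic (In (fst (fst (f x))) L)) as [Hin|Hout].
  - left. exists (fst (fst (f x))). split; [exact Hin|reflexivity].
  - right. split; assumption.
Qed.

Lemma hereditary_weak_P_unboring {X : Type} (I : (X -> Prop) -> Prop) :
  is_ideal I -> hereditary_weak_P I -> unboring I.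
Proof.
  intros Hid HW [f [g Hby]].
  destruct (classic (exists i, ~ I (fun x => column i (f x)))) as [[i Hi]|Hall].
  - apply (HW _ Hi). apply sqsub_trans with (J := restrict BI (column i)).
    + apply Fin2_sqsub_restrict_column.
    + exact (restrict_sqsub_by f g BI I (column i) Hby).
  - assert (Hcol : forall i, I (fun x => column i (f x))).
    { intros i. apply NNPP. intros Hi. apply Hall. exists i. exact Hi. }
    apply (HW (fun _ => True)); [apply Hid|].
    apply sqsub_trans with (J := I); [|apply sqsub_restrict_full].
    apply sqsub_trans with (J := BI_plus_columns); [apply Fin2_sqsub_BI_plus_columns|].
    exists f, g. exact (sqsub_by_BI_plus_columns I f g Hid Hby Hcol).
Qed.

Lemma unboring_weak_P {X : Type} (I : (X -> Prop) -> Prop) : unboring I -> weak_P I.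
Proof. intros Hub HFin2. exact (Hub (sqsub_trans _ _ _ BI_sqsub_Fin2 HFin2)). Qed.

Lemma unboring_subideal {X : Type} (I J : (X -> Prop) -> Prop) :
  (forall A, I A -> J A) -> unboring J -> unboring I.
Proof. intros HIJ HJ HI. exact (HJ (sqsub_subideal _ _ _ HI HIJ)). Qed.

Lemma BI_boring : boring BI.
Proof. apply sqsub_refl. Qed.

Lemma sqsub_by_Fin2_BI_columns_unbounded (f : nat * nat * nat -> nat * nat)
    (g : nat * nat -> nat * nat * nat) :
  sqsub_by f g Fin2 BI -> forall i m, exists y, column i y /\ m < fst (f y).
Proof.
  intros [_ [_ H]] i m. apply NNPP. intros Hn.
  apply (BI_not_column _ i (H _ (Fin2_columns_le m))). intros p. simpl.
  apply Nat.nlt_ge. intros Hlt. apply Hn. exists (i, fst p, snd p). split; [reflexivity|exact Hlt].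
Qed.

Lemma BI_weak_P : weak_P BI.
Proof.
  intros [f [g Hby]].
  pose proof (sqsub_by_Fin2_BI_columns_unbounded f g Hby) as Hesc.
  destruct Hby as [fg [gf H]].
  set (c := fun i m => proj1_sig (constructive_indefinite_description _ (Hesc i m))).
  assert (Hc : forall i m, column i (c i m) /\ m < fst (f (c i m)))
    by (intros i m; exact (proj2_sig (constructive_indefinite_description _ (Hesc i m)))).
  set (S := fun y => exists i m, i <= m /\ y = c i m).
  assert (HS : BI S).
  { assert (HFin2 : Fin2 (fun p => S (g p))).
    { apply Fin2_of_finite_sections. intros n.
      apply (finite_image (fun q => snd (f (c (fst q) (snd q)))) _ _ (finite_pairs_lt n)).
      intros l [i [m [Him E]]].
      assert (Ef : f (c i m) = (n, l)) by (rewrite <- E; apply fg).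
      destruct (Hc i m) as [_ Hm]. rewrite Ef in Hm. simpl in Hm.
      exists (i, m). simpl. rewrite Ef. split; [lia|reflexivity]. }
    apply (BI_subset _ _ (H _ HFin2)). intros y Sy. rewrite gf. exact Sy. }
  destruct HS as [k Hk]. destruct (Hk k) as [_ Hfin].
  destruct (finite_bounded_image (fun p => fst (f (k, fst p, snd p))) _
              (Hfin (le_n k))) as [M HM].
  destruct (Hc k (k + M)) as [Hcol Hgt].
  destruct (c k (k + M)) as [[a j] l] eqn:E.
  unfold column in Hcol. simpl in Hcol. subst a.
  assert (Hin : S (k, j, l)) by (exists k, (k + M); split; [lia|symmetry; exact E]).
  specialize (HM (j, l) Hin). simpl in HM. lia.
Qed.

(** * The ideal [Fin ⊕ Fin2] *)

Definition is_inl {A B : Type} (x : A + B) : Prop :=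
  match x with inl _ => True | inr _ => False end.

Definition is_inr {A B : Type} (x : A + B) : Prop :=
  match x with inl _ => False | inr _ => True end.

Definition Fin_sum_Fin2 (A : nat + nat * nat -> Prop) : Prop :=
  finite_set (fun n => A (inl n)) /\ Fin2 (fun p => A (inr p)).

Lemma countable_infinite_sum : countable_infinite (nat + nat * nat).
Proof.
  apply (countable_infinite_of_retractions inl
           (fun x => match x with inl n => n | inr _ => 0 end)
           (fun x => match x with inl n => to_nat (0, n) | inr p => to_nat (1, to_nat p) end)
           (fun n => match of_nat n with (0, m) => inl m | (_, m) => inr (of_nat m) end)).
  - intros [n|p]; rewrite cancel_of_to; [reflexivity|rewrite cancel_of_to; reflexivity].
  - reflexivity.
Qed.

Lemma Fin_sum_Fin2_ideal : is_ideal Fin_sum_Fin2.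
Proof.
  split; [|split; [|split]].
  - intros A B [Hl Hr] HAB.
    split; [apply (finite_subset _ _ Hl)|apply (Fin2_subset _ _ Hr)]; intros x; apply HAB.
  - intros A B [HAl HAr] [HBl HBr].
    exact (conj (finite_union _ _ HAl HBl) (Fin2_union _ _ HAr HBr)).
  - intros A HA. split.
    + apply (finite_image (fun x => match x with inl n => n | inr _ => 0 end) _ _ HA).
      intros n An. exists (inl n). auto.
    + apply Fin2_of_finite.
      apply (finite_image (fun x => match x with inl _ => (0, 0) | inr p => p end) _ _ HA).
      intros p Ap. exists (inr p). auto.
  - intros [Hl _]. exact (nat_not_finite Hl).
Qed.

Lemma Fin_sum_Fin2_not_hereditary_weak_P : ~ hereditary_weak_P Fin_sum_Fin2.
Proof.
  intros HW. apply (HW is_inr).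
  - intros [_ Hr]. exact (not_Fin2_full Hr).
  - exists (fun y : {x | is_inr x} =>
              match proj1_sig y with inl _ => (0, 0) | inr p => p end).
    exists (fun p => exist is_inr (inr p) I).
    split; [|split].
    + reflexivity.
    + intros [[n|p] Hx]; [destruct Hx|]. apply subset_eq_compat. reflexivity.
    + intros C HC. exists (fun x => match x with inl _ => False | inr p => C p end).
      split; [split; [exists []; intros n []|exact HC]|].
      intros [[n|p] Hx]; [destruct Hx|]. reflexivity.
Qed.

Lemma Fin_sum_Fin2_unboring : unboring Fin_sum_Fin2.
Proof.
  intros [f [g [fg [gf H]]]].
  set (T := fun y => is_inl (g y)).
  assert (HT : finite_set T).
  { apply finite_of_BI_subsets_finite. intros B HB HBT.
    destruct (H B HB) as [Hfin _].
    apply (finite_image (fun n => f (inl n)) _ _ Hfin). intros y By.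
    specialize (HBT y By). unfold T, is_inl in HBT.
    destruct (g y) as [n|p] eqn:E; [|contradiction].
    exists n. rewrite <- E, fg. auto. }
  destruct (H T (BI_of_finite T HT)) as [Hfin _].
  apply nat_not_finite. apply (finite_subset _ _ Hfin).
  intros n _. unfold T. rewrite gf. exact I.
Qed.

Theorem proposition4p10 :
  (* (a) *)
  (forall (X : Type) (I : (X -> Prop) -> Prop),
     countable_infinite X -> is_ideal I ->
     (hereditary_weak_P I -> unboring I) /\ (unboring I -> weak_P I)) /\
  (* (b) *)
  ((exists (X : Type) (I : (X -> Prop) -> Prop),
      countable_infinite X /\ is_ideal I /\ unboring I /\ ~ hereditary_weak_P I) /\
   (exists (X : Type) (I : (X -> Prop) -> Prop),
      countable_infinite X /\ is_ideal I /\ weak_P I /\ boring I)) /\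
  (* (c) *)
  (forall (X : Type) (I : (X -> Prop) -> Prop),
     countable_infinite X -> is_ideal I ->
     ((exists J : (X -> Prop) -> Prop,
         is_ideal J /\ (forall A, I A -> J A) /\ unboring J) -> unboring I) /\
     ((exists J : (X -> Prop) -> Prop,
         is_ideal J /\ (forall A, I A -> J A) /\ hereditary_weak_P J) -> unboring I)).
Proof.
  split; [|split].
  - intros X I _ Hid. split.
    + exact (hereditary_weak_P_unboring I Hid).
    + exact (unboring_weak_P I).
  - split.
    + exists (nat + nat * nat)%type, Fin_sum_Fin2.
      exact (conj countable_infinite_sum (conj Fin_sum_Fin2_ideal
               (conj Fin_sum_Fin2_unboring Fin_sum_Fin2_not_hereditary_weak_P))).
    + exists (nat * nat * nat)%type, BI.
      exact (conj countable_infinite_nat3 (conj BI_ideal (conj BI_weak_P BI_boring))).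
  - intros X I _ _. split.
    + intros [J [_ [HIJ HJ]]]. exact (unboring_subideal I J HIJ HJ).
    + intros [J [HidJ [HIJ HJ]]].
      exact (unboring_subideal I J HIJ (hereditary_weak_P_unboring J HidJ HJ)).
Qed.
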